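(* For any sequence $1>r_1>r_2>\cdots$ decreasing to $0$, there is a distribution $\boldsymbol{\mu}\in\Delta_\mathbb{N}$ such that $2\,\mathbb{E}_{\boldsymbol{X}\sim\boldsymbol{\mu}^m}\|\boldsymbol{\mu}-\widehat{\boldsymbol{\mu}}_m\|_{TV}>r_m$ for all $m\ge1$.
   Context: $\Delta_\mathbb{N}$ is the set of probability distributions on $\mathbb{N}=\{1,2,\dots\}$. $\widehat{\boldsymbol{\mu}}_m(i)=\frac1m\sum_{t=1}^m\mathbb{I}\{X_t=i\}$ for $\boldsymbol{X}=(X_1,\dots,X_m)$. $\|\boldsymbol{\mu}-\boldsymbol{\nu}\|_{TV}=\frac12\sum_i|\boldsymbol{\mu}(i)-\boldsymbol{\nu}(i)|$. *)

From HB Require Import structures.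
From mathcomp Require Import all_boot all_order all_algebra.
From mathcomp Require Import all_classical all_reals all_analysis.
Set Implicit Arguments. Unset Strict Implicit. Unset Printing Implicit Defensive.
Import Order.TTheory GRing.Theory Num.Theory.
Local Open Scope classical_set_scope.
Local Open Scope ring_scope.

(* Distributions on N = {1,2,...}, represented as functions nat -> R that
   vanish at 0 (so the support lies in {1,2,...}), are nonnegative and
   have total mass 1 (countable sum in the extended reals). *)
Definition distrN (R : realType) (mu : nat -> R) : Prop :=
  [/\ mu 0%N = 0, (forall i, 0 <= mu i) &
      (\esum_(i in [set: nat]) (mu i)%:E = 1)%E].

Definition empirical (R : realType) (m : nat) (X : m.-tuple nat) (i : nat) : R :=
  (count_mem i X)%:R / m%:R.

Definition tv_dist (R : realType) (mu nu : nat -> R) : \bar R :=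
  ((1/2 : R)%:E * \esum_(i in [set: nat]) `|mu i - nu i|%:E)%E.

(* E_{X ~ mu^m} || mu - hat mu_m ||_TV, as the countable sum over samples
   X in N^m weighted by the product probability prod_t mu(X_t). *)
Definition expected_tv (R : realType) (mu : nat -> R) (m : nat) : \bar R :=
  (\esum_(X in [set: m.-tuple nat])
      (\prod_(t < m) mu (tnth X t))%:E * tv_dist mu (@empirical R m X))%E.

From HB Require Import structures.
From mathcomp Require Import all_boot all_order all_algebra.
From mathcomp Require Import all_classical all_reals all_analysis.
From mathcomp Require Import ring lra.
Set Implicit Arguments. Unset Strict Implicit. Unset Printing Implicit Defensive.
Import Order.TTheory GRing.Theory Num.Theory.
Local Open Scope classical_set_scope.
Local Open Scope ring_scope.

(* The distribution mu is built scale by scale on the dyadic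
   blocks [2^k, 2^(k+1)): its tail mass mu[2^k, oo) is tail k, which equals
   1 for the first c blocks and then r(2^(k-c)) / a, for a constant
   r_1 < a < 1; inside a block the mass is spread uniformly, so every atom
   in [2^K, oo) weighs at most 2^-K.  For the expected total variation we
   only keep the "missing mass": with m samples, 2 TV(mu, hat mu_m) is at
   least the mu-mass of the atoms not seen in the sample, whose expectation
   is sum_i mu_i (1 - mu_i)^m.  Restricting to the atoms in [2^K, 2^L) with
   K = log2 m + c and L large, Bernoulli's inequality bounds this from below
   by about (1 - m 2^-K) tail K >= (1 - 2/2^c) r(m) / a, which beats r(m)
   once 2/2^c < 1 - a. *)

Lemma fsbig_setT_finType (R : Type) (idx : R) (op : Monoid.com_law idx)
    (T : finType) (F : T -> R) :
  \big[op/idx]_(i \in [set: T]) F i = \big[op/idx]_(i : T) F i.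
Proof.
rewrite (fsbigTE (finmap.seq_fset tt (enum T))); last first.
  by move=> i; rewrite finmap.seq_fsetE mem_enum.
rewrite (perm_big _ (finmap.seq_fset_perm _ _)) undup_id ?enum_uniq //.
by rewrite big_enum.
Qed.

Lemma bernoulli_lb (R : realFieldType) (y : R) (m : nat) :
  0 <= y -> 1 - m%:R * (1 - y) <= y ^+ m.
Proof.
move=> y_ge0; elim: m => [|m IH]; first by rewrite mul0r subr0 expr0.
rewrite exprS; apply: le_trans (ler_wpM2l y_ge0 IH).
rewrite -natr1 -subr_ge0.
have -> : y * (1 - m%:R * (1 - y)) - (1 - (m%:R + 1) * (1 - y))
    = m%:R * (1 - y) ^+ 2 by ring.
by rewrite mulr_ge0 ?ler0n ?sqr_ge0.
Qed.

(* An atom of the block containing 2^(log2 m + c) weighs at most 2^-(log2 m + c),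
   so m such atoms weigh at most 2 / 2^c. *)
Lemma dyadic_scale (R : realFieldType) (m c : nat) :
  m%:R * (1 / (2 ^ (trunc_log 2 m + c))%:R) <= 2 / (2 ^ c)%:R :> R.
Proof.
have pow_gt0 k : 0 < (2 ^ k)%:R :> R by rewrite ltr0n expn_gt0.
rewrite mul1r expnD natrM invfM mulrA ler_pM2r ?invr_gt0 //.
rewrite ler_pdivrMr // ltW // -natrM ltr_nat.
by rewrite -expnS trunc_log_ltn.
Qed.

Lemma exists_dyadic_lt (R : archiRealFieldType) (b : R) :
  0 < b -> exists c, (1 <= c)%N /\ 2 / (2 ^ c)%:R < b.
Proof.
move=> b_gt0; have ratio_ge0 : 0 <= 2 / b by rewrite divr_ge0 // ltW.
have := archi_boundP ratio_ge0; set n := Num.Def.archi_bound _ => lt_n.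
exists n.+1; split => //.
have pow_gt0 : 0 < (2 ^ n.+1)%:R :> R by rewrite ltr0n expn_gt0.
rewrite ltr_pdivrMr // -ltr_pdivrMl // mulrC.
by apply: lt_trans lt_n _; rewrite ltr_nat (ltn_trans (ltnSn n)) // ltn_expl.
Qed.

(* The final inequality, an elementary estimate: x is the mass above 2^K,
   y the mass above 2^L, d the maximal atom size and M the sample size. *)
Lemma missing_mass_gap (R : realFieldType) (x y M d eps rho : R) :
  0 <= y <= x -> x <= 1 -> 0 <= M -> 0 <= d -> M * d <= eps ->
  y < (x * (1 - eps) - rho) / (M + 1) ->
  rho < (1 - M * (y + d)) * (x - y).
Proof.
move=> /andP[y_ge0 yx] x_le1 M_ge0 d_ge0 Md_le; rewrite ltr_pdivlMr; last lra.
move=> y_lt.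
have Myx_ge0 : 0 <= M * y * (1 - x) by rewrite !mulr_ge0 // subr_ge0.
have slack_ge0 : 0 <= x * (eps - M * d) by rewrite mulr_ge0 ?subr_ge0 //; lra.
have Myy_ge0 : 0 <= M * y * y by rewrite !mulr_ge0.
have yMd_ge0 : 0 <= y * (M * d) by rewrite !mulr_ge0.
have -> : (1 - M * (y + d)) * (x - y) = x * (1 - eps) - (M + 1) * y +
    (M * y * (1 - x) + x * (eps - M * d) + M * y * y + y * (M * d)) by ring.
lra.
Qed.

Section Rate.
Variables (R : realType) (r : nat -> R).
Hypothesis r_dec : forall n, (1 <= n)%N -> r n.+1 < r n.

Lemma rate_le n k : (1 <= n)%N -> (n <= k)%N -> r k <= r n.
Proof.
move=> n_ge1; elim: k => [|k IH]; first by rewrite leqn0 => /eqP n0; rewrite n0 in n_ge1.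
rewrite leq_eqVlt => /orP[/eqP -> //|]; rewrite ltnS => nk.
by apply: le_trans (IH nk); apply/ltW/r_dec/(leq_trans n_ge1 nk).
Qed.

Hypothesis r_cvg : r @ \oo --> 0.

Lemma rate_eventually_lt (e : R) : 0 < e -> exists N, forall n, (N <= n)%N -> r n < e.
Proof.
move: r_cvg => /cvgrPdist_lt cvg e_gt0; have [N _ rN] := cvg e e_gt0.
exists N => n Nn; have := rN n Nn; rewrite /= sub0r normrN.
exact/le_lt_trans/ler_norm.
Qed.

Lemma rate_gt0 n : (1 <= n)%N -> 0 < r n.
Proof.
move=> n_ge1; rewrite ltNge; apply/negP => rn_le0.
have rSn_lt0 : r n.+1 < 0 by apply: lt_le_trans (r_dec n_ge1) rn_le0.
move: r_cvg => /cvgrPdist_lt/(_ (- r n.+1)); rewrite oppr_gt0 => /(_ rSn_lt0).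
move=> [N _ /(_ (maxn N n.+1) (leq_maxl _ _))]; rewrite /= sub0r normrN.
have r_le : r (maxn N n.+1) <= r n.+1 by apply: rate_le => //; exact: leq_maxr.
by rewrite ler0_norm ?ltrN2 ?ltNge ?r_le // (le_trans r_le (ltW rSn_lt0)).
Qed.

End Rate.

Definition sample_of {m N : nat} (f : {ffun 'I_m -> 'I_N}) : m.-tuple nat :=
  [tuple (nat_of_ord (f t)) | t < m].

Lemma sample_of_inj m N : injective (@sample_of m N).
Proof.
move=> f1 f2 /(congr1 (fun X => tnth X)) eq12; apply/ffunP => t; apply/val_inj.
by have := congr1 (fun h => h t) eq12; rewrite /= !tnth_mktuple.
Qed.

Section MissingMass.
Variables (R : realType) (mu : nat -> R).
Hypothesis mu_ge0 : forall i, 0 <= mu i.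

Lemma expected_tv_ge_finite m N :
  (\sum_(f : {ffun 'I_m -> 'I_N})
     ((\prod_(t < m) mu (f t))%:E * tv_dist mu (empirical R (sample_of f)))
   <= expected_tv mu m)%E.
Proof.
rewrite /expected_tv; apply: esum_ge; exists (@sample_of m N @` setT).
  by split => //; apply: finite_image; exact: finite_finset.
rewrite fsbig_image; last by move=> x y _ _; apply: sample_of_inj.
rewrite fsbig_setT_finType le_eqVlt; apply/orP; left; apply/eqP/eq_bigr => f _.
by congr (_ * _)%E; congr (_%:E); apply: eq_bigr => t _; rewrite tnth_mktuple.
Qed.

(* Twice the total variation distance is at least the missing mass: the
   mass of the atoms (here those in [K, N)) that do not occur in the sample. *)
Lemma tv_ge_missing_mass m (X : m.-tuple nat) N K :
  ((1/2 : R)%:E * (\sum_(i < N) (if (K <= i)%N && (nat_of_ord i \notin X)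
                                  then mu i else 0))%:E
   <= tv_dist mu (empirical R X))%E.
Proof.
rewrite /tv_dist; apply: lee_wpmul2l; first by rewrite lee_fin.
apply: esum_ge; exists `I_N; first by split => //; exact: finite_II.
rewrite -fsbig_ord sumEFin lee_fin; apply: ler_sum => i _.
case: ifP => [/andP[_ iX]|_]; last exact: normr_ge0.
by rewrite /empirical (count_memPn iX) mul0r subr0 ger0_norm.
Qed.

(* Expected missing mass: an atom i is missed by all m draws (restricted
   to values below N) with probability (S - mu i)^m, S the mass below N. *)
Lemma expected_missing_mass m N K :
  \sum_(f : {ffun 'I_m -> 'I_N}) ((\prod_(t < m) mu (f t)) *
     (\sum_(i < N) (if (K <= i)%N && (nat_of_ord i \notin sample_of f)
                    then mu i else 0)))
  = \sum_(i < N) (if (K <= i)%N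
                  then mu i * (\sum_(j < N) mu j - mu i) ^+ m else 0).
Proof.
under eq_bigr do rewrite mulr_sumr.
rewrite exchange_big /=; apply: eq_bigr => i _.
case: (K <= i)%N => /=; last by rewrite big1 // => f _; rewrite mulr0.
have missed_i (f : {ffun 'I_m -> 'I_N}) :
    (\prod_(t < m) mu (f t)) * (if nat_of_ord i \notin sample_of f then mu i else 0)
    = mu i * \prod_(t < m) (mu (f t) * (f t != i)%:R).
  rewrite big_split /= mulrC; case: ifP => iX.
    rewrite [X in _ * (_ * X)]big1 ?mulr1 //= => t _.
    case: eqP => // fti; move/negP: iX; case; rewrite -fti.
    by have := mem_tnth t (sample_of f); rewrite tnth_mktuple.
  move/negbFE/tnthP: iX => [t]; rewrite tnth_mktuple => /val_inj fti.
  by rewrite mul0r [X in _ = _ * (_ * X)](bigD1 t) //= -fti eqxx mul0r !mulr0.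
under eq_bigr do rewrite missed_i; rewrite -mulr_sumr; congr (_ * _).
rewrite -(bigA_distr_bigA (fun (t : 'I_m) (j : 'I_N) => mu j * (j != i)%:R)) /=.
rewrite prodr_const card_ord; congr (_ ^+ _).
rewrite [in RHS](bigD1 i) //= [in LHS](bigD1 i) //= eqxx mulr0 add0r addrC addrK.
by apply: eq_bigr => j ji; rewrite ji mulr1.
Qed.

Lemma expected_tv_ge_missing_mass m N K :
  ((\sum_(i < N) (if (K <= i)%N then mu i * (\sum_(j < N) mu j - mu i) ^+ m
                  else 0))%:E
    <= 2%:E * expected_tv mu m)%E.
Proof.
rewrite -expected_missing_mass -sumEFin.
have two_ge0 : (0 <= 2%:E :> \bar R)%E by rewrite lee_fin.
apply: le_trans (lee_wpmul2l two_ge0 (expected_tv_ge_finite m N)).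
rewrite ge0_sume_distrr; last first.
  move=> f _; apply: mule_ge0; first by rewrite lee_fin prodr_ge0.
  by rewrite /tv_dist mule_ge0 ?lee_fin ?esum_ge0.
apply: lee_sum => f _.
have prob_ge0 : (0 <= (\prod_(t < m) mu (f t))%:E)%E by rewrite lee_fin prodr_ge0.
apply: le_trans (lee_wpmul2l two_ge0
  (lee_wpmul2l prob_ge0 (tv_ge_missing_mass (sample_of f) N K))).
by rewrite -!EFinM lee_fin le_eqVlt; apply/orP; left; apply/eqP; field.
Qed.

End MissingMass.

(* tail r a c k is the mass of the constructed distribution on [2^k, oo):
   1 on the first c dyadic scales, then the rate r read at dyadic points,
   shifted by c scales and divided by a. *)
Definition tail {R : realType} (r : nat -> R) (a : R) (c k : nat) : R :=
  if (k < c)%N then 1 else r (2 ^ (k - c))%N / a.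

(* The distribution: the mass tail k - tail k.+1 of the block [2^k, 2^(k+1))
   is spread uniformly over its 2^k atoms; the atom 0 gets no mass. *)
Definition dyadic_mu {R : realType} (r : nat -> R) (a : R) (c i : nat) : R :=
  if i == 0%N then 0 else
  (tail r a c (trunc_log 2 i) - tail r a c (trunc_log 2 i).+1)
    / (2 ^ trunc_log 2 i)%:R.

Section DyadicDistribution.
Variables (R : realType) (r : nat -> R) (a : R) (c : nat).
Hypothesis r_dec : forall n, (1 <= n)%N -> r n.+1 < r n.
Hypothesis r_cvg : r @ \oo --> 0.
Hypothesis r1_lt_a : r 1%N < a.
Hypothesis c_gt0 : (1 <= c)%N.

Let T := tail r a c.
Let mu := dyadic_mu r a c.
Let r_gt0 := rate_gt0 r_dec r_cvg.

Let a_gt0 : 0 < a. Proof. exact: lt_trans (r_gt0 (leqnn 1)) r1_lt_a. Qed.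

Lemma tail0 : T 0 = 1. Proof. by rewrite /T /tail c_gt0. Qed.

Lemma tail_ge0 k : 0 <= T k.
Proof. by rewrite /T /tail; case: ifP => // _; rewrite ltW ?divr_gt0 ?r_gt0 ?expn_gt0. Qed.

Lemma tail_le1 k : T k <= 1.
Proof.
rewrite /T /tail; case: ifP => // _; rewrite ler_pdivrMr // mul1r ltW //.
by apply: le_lt_trans r1_lt_a; apply: rate_le; rewrite ?expn_gt0.
Qed.

Lemma tail_le k l : (k <= l)%N -> T l <= T k.
Proof.
have tail_leS j : T j.+1 <= T j.
  rewrite /T /tail; case: (ltnP j.+1 c) => [jc|cj]; first by rewrite ifT // ltnW.
  case: ifP => [_|jc]; first by have := tail_le1 j.+1; rewrite /T /tail ltnNge cj.
  rewrite ler_pM2r ?invr_gt0 // rate_le ?expn_gt0 // leq_exp2l //.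
  by rewrite subSn // leqNgt jc.
elim: l => [|l IH]; first by rewrite leqn0 => /eqP ->.
rewrite leq_eqVlt => /orP[/eqP -> //|]; rewrite ltnS => kl.
exact: le_trans (tail_leS l) (IH kl).
Qed.

Lemma tail_at_scale m : (1 <= m)%N -> r m <= a * T (trunc_log 2 m + c).
Proof.
move=> m_ge1; rewrite /T /tail ltnNge leq_addl /= addnK mulrC divfK ?gt_eqF //.
by rewrite rate_le ?expn_gt0 // trunc_logP.
Qed.

Lemma tail_vanishes e K : 0 < e -> exists L, (K <= L)%N /\ T L < e.
Proof.
move=> e_gt0; have [N rN] := rate_eventually_lt r_cvg (mulr_gt0 e_gt0 a_gt0).
exists (N + K + c)%N; split; first by rewrite addnAC leq_addl.
rewrite /T /tail ltnNge leq_addl /= addnK ltr_pdivrMr // rN //.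
by rewrite (leq_trans (leq_addr K N)) // ltnW // ltn_expl.
Qed.

Lemma dyadic_mu_ge0 i : 0 <= mu i.
Proof.
rewrite /mu /dyadic_mu; case: ifP => // _.
by rewrite divr_ge0 ?ler0n // subr_ge0 tail_le.
Qed.

Lemma dyadic_mu_le K i : (2 ^ K <= i)%N -> mu i <= 1 / (2 ^ K)%:R.
Proof.
move=> Ki; rewrite /mu /dyadic_mu -/T; case: ifP => [_|_]; first by rewrite divr_ge0.
have K_le : (K <= trunc_log 2 i)%N by apply: trunc_log_max.
apply: (@le_trans _ _ (1 / (2 ^ trunc_log 2 i)%:R)).
  rewrite ler_pM2r ?invr_gt0 ?ltr0n ?expn_gt0 //.
  by have := tail_le1 (trunc_log 2 i); have := tail_ge0 (trunc_log 2 i).+1; lra.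
by rewrite !mul1r lef_pV2 ?posrE ?ltr0n ?expn_gt0 // ler_nat leq_exp2l.
Qed.

Lemma sum_dyadic_mu L : \sum_(0 <= i < 2 ^ L) mu i = 1 - T L.
Proof.
elim: L => [|L IH]; first by rewrite expn0 big_nat1 /mu /dyadic_mu eqxx tail0 subrr.
have pow_gt0 : (0 < 2 ^ L)%N by rewrite expn_gt0.
rewrite (big_cat_nat (n := 2 ^ L)) //=; last by rewrite leq_exp2l.
rewrite IH (eq_big_nat _ _ (F2 := fun=> (T L - T L.+1) / (2 ^ L)%:R)); last first.
  move=> i /andP[Li iL]; rewrite /mu /dyadic_mu ifF; last first.
    by apply/negbTE; rewrite -lt0n (leq_trans pow_gt0).
  by rewrite (trunc_log_eq (n := L)) // Li iL.
rewrite sumr_const_nat expnS mul2n -addnn addnK -[(_ / _) *+ _]mulr_natr mulfVK.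
  by rewrite addrA subrK.
by rewrite pnatr_eq0 -lt0n.
Qed.

Lemma sum_dyadic_mu_ord L : \sum_(i < 2 ^ L) mu i = 1 - T L.
Proof. by rewrite -(big_mkord xpredT) sum_dyadic_mu. Qed.

Lemma sum_dyadic_mu_block K L : (K <= L)%N ->
  \sum_(i < 2 ^ L) (if (2 ^ K <= i)%N then mu i else 0) = T K - T L.
Proof.
move=> KL; have KL2 : (2 ^ K <= 2 ^ L)%N by rewrite leq_exp2l.
rewrite -(big_mkord xpredT (fun i => if (2 ^ K <= i)%N then mu i else 0)).
rewrite (big_cat_nat (n := 2 ^ K)) //= big_nat_cond big1 ?add0r; last first.
  by move=> i /andP[/andP[_ iK] _]; rewrite leqNgt iK.
rewrite (eq_big_nat _ _ (F2 := mu)); last by move=> i /andP[-> _].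
have := sum_dyadic_mu L; rewrite (big_cat_nat (n := 2 ^ K)) //= sum_dyadic_mu.
by move=> sumL; rewrite -[LHS](addKr (1 - T K)) sumL; ring.
Qed.

(* The total mass is 1: the partial sums up to 2^L are 1 - tail L -> 1. *)
Lemma dyadic_mu_esum : (\esum_(i in [set: nat]) (mu i)%:E = 1)%E.
Proof.
have mu_ge0 n : (0 <= (mu n)%:E)%E by rewrite lee_fin dyadic_mu_ge0.
rewrite -nneseries_esumT //; apply/eqP; rewrite eq_le; apply/andP; split.
  apply: lime_le; first exact: is_cvg_nneseries.
  apply: nearW => n; rewrite sumEFin lee_fin.
  have n_le : (n <= 2 ^ n)%N by rewrite ltnW // ltn_expl.
  apply: (@le_trans _ _ (\sum_(0 <= i < 2 ^ n) mu i)).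
    rewrite (big_cat_nat (leq0n n) n_le) /= lerDl.
    by apply: sumr_ge0 => i _; exact: dyadic_mu_ge0.
  by rewrite sum_dyadic_mu gerBl tail_ge0.
apply/lee_addgt0Pr => e e_gt0; have [L [_ TL]] := tail_vanishes 0 e_gt0.
have := @nneseries_lim_ge R (fun i => (mu i)%:E) xpredT 0 (2 ^ L)
  (fun n _ _ => mu_ge0 n).
rewrite sumEFin sum_dyadic_mu => partial_le.
apply: le_trans (leeD partial_le (lexx _)).
by rewrite -EFinD lee_fin; lra.
Qed.

Lemma dyadic_mu_distr : distrN mu.
Proof.
by split; [rewrite /mu /dyadic_mu eqxx | exact: dyadic_mu_ge0 | exact: dyadic_mu_esum].
Qed.

(* On the atoms of [2^K, 2^L), each of weight at most 2^-K, Bernoulli's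
   inequality turns the expected missing mass into a linear lower bound. *)
Lemma dyadic_missing_mass_lb m K L : (K <= L)%N ->
  (1 - m%:R * (T L + 1 / (2 ^ K)%:R)) * (T K - T L) <=
  \sum_(i < 2 ^ L) (if (2 ^ K <= i)%N
                    then mu i * (\sum_(j < 2 ^ L) mu j - mu i) ^+ m else 0).
Proof.
move=> KL; rewrite sum_dyadic_mu_ord -(sum_dyadic_mu_block KL) mulr_sumr.
apply: ler_sum => i _; case: ifP => iK; last by rewrite mulr0.
have mui_ge0 := dyadic_mu_ge0 i.
have mui_le_atom : m%:R * mu i <= m%:R * (1 / (2 ^ K)%:R).
  by rewrite ler_wpM2l ?ler0n ?dyadic_mu_le.
have mui_le_rest : mu i <= 1 - T L.
  rewrite -(sum_dyadic_mu_ord L) (bigD1 i) //= lerDl.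
  by apply: sumr_ge0 => j _; exact: dyadic_mu_ge0.
rewrite mulrC; apply: le_trans (ler_wpM2l mui_ge0 (bernoulli_lb m _)); last lra.
by rewrite ler_wpM2l //; lra.
Qed.

End DyadicDistribution.


Theorem proposition2 (R : realType) (r : nat -> R) :
  r 1%N < 1 ->
  (forall n, (1 <= n)%N -> r n.+1 < r n) ->
  r @ \oo --> 0 ->
  exists mu : nat -> R, distrN mu /\
    forall m : nat, (1 <= m)%N -> ((r m)%:E < 2%:E * expected_tv mu m)%E.
Proof.
move=> r1_lt1 r_dec r_cvg.
have r_gt0 := rate_gt0 r_dec r_cvg.
pose a := (1 + r 1%N) / 2.
have r1_lt_a : r 1%N < a by rewrite /a; lra.
have [c [c_gt0 eps_lt]] : exists c, (1 <= c)%N /\ 2 / (2 ^ c)%:R < 1 - a.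
  by apply: exists_dyadic_lt; rewrite /a; lra.
set eps := 2 / _ in eps_lt.
exists (dyadic_mu r a c); split; first exact: dyadic_mu_distr.
move=> m m_ge1.
pose K := (trunc_log 2 m + c)%N; pose x := tail r a c K.
(* The mass above 2^K, discounted by the atom sizes, still beats r(m). *)
have rm_lt : r m < x * (1 - eps).
  have rm_le : r m <= a * x := tail_at_scale c r_dec r_cvg r1_lt_a m_ge1.
  have := r_gt0 _ m_ge1; have := r_gt0 _ (leqnn 1); nra.
have gap_gt0 : 0 < (x * (1 - eps) - r m) / (m%:R + 1).
  by rewrite divr_gt0 ?subr_gt0 // ltr_wpDl ?ler0n.
have [L [KL yL]] := tail_vanishes c r_dec r_cvg r1_lt_a K gap_gt0.
have mu_ge0 := dyadic_mu_ge0 c r_dec r_cvg r1_lt_a.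
apply: lt_le_trans (expected_tv_ge_missing_mass mu_ge0 m (2 ^ L) (2 ^ K)).
rewrite lte_fin; apply: lt_le_trans (dyadic_missing_mass_lb r_dec r_cvg r1_lt_a c_gt0 m KL).
apply: missing_mass_gap yL; rewrite ?tail_ge0 ?tail_le ?tail_le1 ?ler0n //.
exact: dyadic_scale.
Qed.
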